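(* Let $L$ be a distributive lattice and let $a,b\in L$ with $a<b$. Then $$\max\{\aleph_0,|[a,b]_L|\}\le\operatorname{dens}\big([\delta_a,\delta_b]_{\mathrm{FBL}\langle L\rangle}\big)\le\max\{\aleph_0,|L|\},$$ where $[a,b]_L=\{x\in L:a\le x\le b\}$ and $[\delta_a,\delta_b]_{\mathrm{FBL}\langle L\rangle}=\{f\in\mathrm{FBL}\langle L\rangle:\delta_a\le f\le\delta_b\}$ (with the norm topology).
   Context: $L^*$ is the set of all lattice homomorphisms $x^*:L\to[-1,1]$; for $x\in L$, $\delta_x:L^*\to\mathbb R$ is $\delta_x(x^* )=x^*(x)$. A function $f:L^*\to\mathbb R$ is positively homogeneous if $f(\lambda x^* )=\lambda f(x^* )$ whenever $\lambda\ge0$ and $\lambda x^*\in L^*$; for such $f$, $\|f\|=\sup\{\sum_{i=1}^m|f(x_i^* )|: m\in\mathbb N,\ x_i^*\in L^*,\ \sup_{x\in L}\sum_{i=1}^m|x_i^*(x)|\le1\}$. $\mathrm{FBL}\langle L\rangle$ is the norm closure of the vector sublattice generated by $\{\delta_x:x\in L\}$ inside the Banach lattice of positively homogeneous functions on $L^*$ with finite norm, with pointwise order and operations. The density character $\operatorname{dens}(S)$ is the least cardinality of a dense subset of $S$. *)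

From HB Require Import structures.
From mathcomp Require Import all_boot all_order all_algebra.
From mathcomp Require Import all_classical all_reals.
Set Implicit Arguments. Unset Strict Implicit. Unset Printing Implicit Defensive.
Import Order.TTheory GRing.Theory Num.Theory.
Local Open Scope ring_scope.
Local Open Scope classical_set_scope.

Section FBL.
Context {d : Order.disp_t} (L : distrLatticeType d) (R : realType).

Definition is_LstarB (xs : L -> R) : Prop :=
  (forall x, -1 <= xs x <= 1) /\
  (forall x y, xs (Order.meet x y) = Num.min (xs x) (xs y)) /\
  (forall x y, xs (Order.join x y) = Num.max (xs x) (xs y)).

Definition Lstar := {xs : L -> R | is_LstarB xs}.

Definition delta (x : L) : Lstar -> R := fun xs => sval xs x.

Definition pos_homogeneous (f : Lstar -> R) : Prop :=
  forall (xs ys : Lstar) (lam : R), 0 <= lam ->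
    (forall x, sval ys x = lam * sval xs x) -> f ys = lam * f xs.

Definition norm_set (f : Lstar -> R) : set R :=
  [set r | exists (m : nat) (xs : 'I_m -> Lstar),
     (forall x : L, \sum_(i < m) `|sval (xs i) x| <= 1) /\
     r = \sum_(i < m) `|f (xs i)|].

Definition finite_norm (f : Lstar -> R) : Prop := has_ubound (norm_set f).

Definition fnorm (f : Lstar -> R) : R := sup (norm_set f).

Inductive gen_sublattice : (Lstar -> R) -> Prop :=
| gs_delta x : gen_sublattice (delta x)
| gs_add f g : gen_sublattice f -> gen_sublattice g ->
               gen_sublattice (fun s => f s + g s)
| gs_scale (c : R) f : gen_sublattice f -> gen_sublattice (fun s => c * f s)
| gs_max f g : gen_sublattice f -> gen_sublattice g ->
               gen_sublattice (fun s => Num.max (f s) (g s)).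

Definition FBL : set (Lstar -> R) :=
  [set f | pos_homogeneous f /\ finite_norm f /\
     forall eps : R, 0 < eps ->
       exists g, gen_sublattice g /\ fnorm (fun s => f s - g s) < eps].

Definition FBL_interval (a b : L) : set (Lstar -> R) :=
  [set f | FBL f /\ forall s, delta a s <= f s <= delta b s].

Definition dense_subset (S D : set (Lstar -> R)) : Prop :=
  D `<=` S /\
  forall f, S f -> forall eps : R, 0 < eps ->
    exists g, D g /\ fnorm (fun s => f s - g s) < eps.

End FBL.

(* Lower bound: by the prime filter theorem, whenever x is not below y there is
   a lattice homomorphism s : L -> {0, 1} with s x = 1 and s y = 0.  Evaluating
   at such homomorphisms, the delta_x with a <= x <= b are at mutual distance at
   least 1, and the points (1 - 2^-n) delta_a + 2^-n delta_b of the segment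
   [delta_a, delta_b] are at distance at least 2^-(n+1) from the later ones; a
   dense set contains pairwise distinct approximants of such a separated family.
   Upper bound: the functions built from the delta_x by sums, rational multiples
   and maxima, clamped between delta_a and delta_b, are dense in the interval,
   since clamping does not increase the distance to its members.  They are
   indexed by finite terms over L and N, of which there are at most
   max(aleph_0, |L|) by Hessenberg's theorem |X * X| = |X| for infinite X. *)

From HB Require Import structures.
From mathcomp Require Import all_boot all_order all_algebra.
From mathcomp Require Import all_classical all_reals.
From mathcomp Require Import lra ring.
Import Order.TTheory GRing.Theory Num.Theory.
Set Implicit Arguments. Unset Strict Implicit. Unset Printing Implicit Defensive.
Local Open Scope classical_set_scope.
Local Open Scope card_scope.

Lemma Zorn_bigcup_above (T : Type) (P : set (set T)) (A0 : set T) : P A0 ->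
  (forall F, F `<=` P -> total_on F subset -> P (\bigcup_(X in F) X)) ->
  exists A, [/\ P A, A0 `<=` A & forall B, A `<` B -> ~ P B].
Proof.
(* [set0] is admitted only so that the union of the empty chain qualifies. *)
move=> PA0 Pcup; pose Q Z := P Z /\ (Z = set0 \/ A0 `<=` Z).
have [A [[PA A0A] Amax]] : exists A, Q A /\ forall B, A `<` B -> ~ Q B.
  apply: Zorn_bigcup => F FQ Ftot; split; first by apply: Pcup => // Z /FQ[].
  have [->|/set0P[t [Z FZ Zt]]] := eqVneq (\bigcup_(X in F) X) set0; first by left.
  right; have [_ [Z0|]] := FQ Z FZ; first by rewrite Z0 in Zt.
  by move=> /subset_trans; apply; exact: bigcup_sup.
have {}A0A : A0 `<=` A.
  case: A0A => // A0'; have [->//|A0n] := eqVneq A0 set0.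
  exfalso; apply: (Amax A0); last by split; [|right].
  by rewrite A0'; split; [exact: sub0set|rewrite subset0; apply/eqP].
exists A; split=> // B AB PB; apply: (Amax B AB); split=> //; right.
exact: subset_trans A0A (proj1 AB).
Qed.

Definition embeds (T U : Type) (A : set T) (B : set U) :=
  exists2 f : T -> U, (forall x, A x -> B (f x)) &
    (forall x y, A x -> A y -> f x = f y -> x = y).

Lemma embeds_card_le (T U : Type) (A : set T) (B : set U) : embeds A B -> A #<= B.
Proof.
move=> [f fAB finj]; have [g] : $|{injfun A >-> B}|.
  by apply/injfunPex; exists f => [x /fAB|x y /set_mem Ax /set_mem Ay /finj]; auto.
exact: inj_card_le.
Qed.

Lemma embeds_trans (T U V : Type) (A : set T) (B : set U) (C : set V) :
  embeds A B -> embeds B C -> embeds A C.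
Proof.
move=> [f fAB finj] [g gBC ginj]; exists (g \o f) => [x /fAB/gBC //|x y Ax Ay /=].
by move/ginj => /(_ (fAB _ Ax) (fAB _ Ay)); exact: finj.
Qed.

Lemma embeds_sub (T U : Type) (A A' : set T) (B : set U) :
  A `<=` A' -> embeds A' B -> embeds A B.
Proof.
by move=> AA' [f fAB finj]; exists f => [x /AA'/fAB|x y /AA' Ax /AA' Ay /finj]; auto.
Qed.

Lemma embeds_setX (T U V W : Type) (A : set T) (B : set U) (C : set V) (D : set W) :
  embeds A B -> embeds C D -> embeds (A `*` C) (B `*` D).
Proof.
move=> [f fAB finj] [g gCD ginj]; exists (fun p => (f p.1, g p.2)).
  by move=> p [/fAB ? /gCD ?].
by move=> [x z] [y w] [/= Ax Cz] [/= Ay Cw] [/finj-> // /ginj->].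
Qed.

Lemma embeds_image (T : Type) (A : set T) (f : T -> T) :
  (forall x y, A x -> A y -> f x = f y -> x = y) -> embeds (f @` A) A.
Proof.
move=> finj; have [h hP] : {h : T -> T & forall y, (f @` A) y -> A (h y) /\ f (h y) = y}.
  apply: (@choice _ _ (fun y x => (f @` A) y -> A x /\ f x = y)) => y.
  by case: (pselect ((f @` A) y)) => [[x Ax <-]|nfy]; [exists x|exists y].
exists h => [y /hP[]//|y y' /hP[Ay fy] /hP[Ay' fy'] hyy'].
by rewrite -fy -fy' hyy'.
Qed.

Section Matching.
Variable X : Type.
Implicit Types (S T : set X) (h : set (X * X)).

Definition matching S T h := [/\ h `<=` S `*` T,
  forall x y y', h (x, y) -> h (x, y') -> y = y' &
  forall x x' y, h (x, y) -> h (x', y) -> x = x'].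

Lemma matching0 S T : matching S T set0.
Proof. by split=> // ? []. Qed.

Lemma matching_swap S T h : matching S T h -> matching T S [set p | h (p.2, p.1)].
Proof.
by case=> hST hfun hinj; split=> [[y x] /hST[]|y x x'|y y' x]; [|exact: hinj|exact: hfun].
Qed.

Lemma matching_embeds S T h :
  matching S T h -> (forall x, S x -> exists y, h (x, y)) -> embeds S T.
Proof.
case=> hST _ hinj htot.
have [f fP] : {f : X -> X & forall x, S x -> h (x, f x)}.
  apply: (@choice _ _ (fun x y => S x -> h (x, y))) => x.
  by case: (pselect (S x)) => [/htot[y]|nSx]; [exists y|exists x].
exists f => [x /fP /hST[]//|x y Sx Sy fxy].
by apply: (hinj _ _ (f x) (fP _ Sx)); rewrite fxy; exact: fP.
Qed.

Lemma matching_bigcup S T (F : set (set (X * X))) :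
  F `<=` matching S T -> total_on F subset -> matching S T (\bigcup_(h in F) h).
Proof.
move=> Fm Ftot; split=> [p [h /Fm[hST _ _] /hST //]|x y y'|x x' y] [h1 F1 h1p] [h2 F2 h2p].
- have [[_ fun1 _] [_ fun2 _]] := (Fm h1 F1, Fm h2 F2).
  by case: (Ftot h1 h2 F1 F2) => sub; [exact: fun2 (sub _ h1p) h2p|exact: fun1 h1p (sub _ h2p)].
- have [[_ _ inj1] [_ _ inj2]] := (Fm h1 F1, Fm h2 F2).
  by case: (Ftot h1 h2 F1 F2) => sub; [exact: inj2 (sub _ h1p) h2p|exact: inj1 h1p (sub _ h2p)].
Qed.

Lemma embeds_comparable S T : embeds S T \/ embeds T S.
Proof.
have [h [hm _ hmax]] := Zorn_bigcup_above (matching0 S T) (@matching_bigcup S T).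
case: (pselect (forall x, S x -> exists y, h (x, y))) => [Stot|/existsNP[x0]].
  by left; exact: matching_embeds hm Stot.
move=> /not_implyP[Sx0 x0free]; right; apply: matching_embeds (matching_swap hm) _ => y Ty.
apply: contrapT => yfree; apply: (hmax (h `|` [set (x0, y)])).
  split=> [p hp|/(_ (x0, y) (or_intror erefl)) hx0y]; first by left.
  by apply: x0free; exists y.
case: hm => hST hfun hinj.
split=> [p [/hST//|->//]|x z z'|x x' z] [hxz|[? ?]] [hxz'|[? ?]]; subst=> //.
- exact: hfun hxz hxz'.
- by case: x0free; exists z.
- by case: x0free; exists z'.
- exact: hinj hxz hxz'.
- by case: yfree; exists x.
- by case: yfree; exists x'.
Qed.

End Matching.

Lemma embeds_setU_pairing (X : Type) (A B : set X) (a0 a1 : X) :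
  embeds (A `*` A) A -> A a0 -> A a1 -> a0 <> a1 -> embeds B A -> embeds (A `|` B) A.
Proof.
move=> [g gA ginj] Aa0 Aa1 a01 [f fBA finj].
pose tag x := if pselect (A x) then (a0, x) else (a1, f x).
have tagA x : (A `|` B) x -> (A `*` A) (tag x).
  by rewrite /tag; case: pselect => [Ax _|nAx [//|/fBA]]; split.
exists (g \o tag) => [x /tagA/gA //|x y ABx ABy /= /ginj].
move=> /(_ (tagA _ ABx) (tagA _ ABy)); rewrite /tag.
case: pselect => Ax; case: pselect => Ay [].
- by [].
- by move/a01.
- by move/esym/a01.
- by move=> fxy; apply: (finj _ _ _ _ fxy); [case: ABx|case: ABy].
Qed.

Section SquarePairing.
Variable X : Type.
Local Notation triple := ((X * X) * X)%type.

Definition pairing_dom (G : set triple) : set X := [set x | exists z, G ((x, x), z)].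

(* [G] is the graph of an injective map [A * A -> A], where the domain [A] is
   read off the diagonal. *)
Definition square_pairing (G : set triple) :=
  [/\ forall u v z, G ((u, v), z) ->
        [/\ pairing_dom G u, pairing_dom G v & pairing_dom G z],
      forall p z z', G (p, z) -> G (p, z') -> z = z',
      forall p p' z, G (p, z) -> G (p', z) -> p = p' &
      forall u v, pairing_dom G u -> pairing_dom G v -> exists z, G ((u, v), z)].

Lemma pairing_dom_sub (G G' : set triple) : G `<=` G' -> pairing_dom G `<=` pairing_dom G'.
Proof. by move=> GG' x [z /GG' Gz]; exists z. Qed.

Lemma square_pairing_embeds (G : set triple) :
  square_pairing G -> embeds (pairing_dom G `*` pairing_dom G) (pairing_dom G).
Proof.
case=> Gdom Gfun Ginj Gtot; set A := pairing_dom G.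
have [g gP] : {g : X * X -> X & forall p, (A `*` A) p -> G (p, g p)}.
  apply: (@choice _ _ (fun p z => (A `*` A) p -> G (p, z))) => -[u v].
  case: (pselect ((A `*` A) (u, v))) => [[/= Au Av]|nAA]; last by exists u.
  by have [z Gz] := Gtot u v Au Av; exists z.
exists g => [[u v] /gP/Gdom[]//|p q /gP Gp /gP Gq gpq].
by apply: Ginj Gp _; rewrite gpq.
Qed.

Lemma square_pairing_bigcup (F : set (set triple)) :
  F `<=` square_pairing -> total_on F subset -> square_pairing (\bigcup_(G in F) G).
Proof.
move=> FP Ftot; set U := \bigcup_(G in F) G.
have domU G : F G -> pairing_dom G `<=` pairing_dom U.
  by move=> FG; apply: pairing_dom_sub; exact: bigcup_sup.
split.
- move=> u v z [G FG]; case: (FP G FG) => Gdom _ _ _ /Gdom[Gu Gv Gz].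
  by split; apply: domU FG _ _.
- move=> p z z' [G1 F1 G1p] [G2 F2 G2p].
  have [[_ fun1 _ _] [_ fun2 _ _]] := (FP G1 F1, FP G2 F2).
  by case: (Ftot G1 G2 F1 F2) => sub; [exact: fun2 (sub _ G1p) G2p|exact: fun1 G1p (sub _ G2p)].
- move=> p p' z [G1 F1 G1p] [G2 F2 G2p].
  have [[_ _ inj1 _] [_ _ inj2 _]] := (FP G1 F1, FP G2 F2).
  by case: (Ftot G1 G2 F1 F2) => sub; [exact: inj2 (sub _ G1p) G2p|exact: inj1 G1p (sub _ G2p)].
- move=> u v [zu [G1 F1 G1u]] [zv [G2 F2 G2v]].
  have [[_ _ _ tot1] [_ _ _ tot2]] := (FP G1 F1, FP G2 F2).
  have [G [FG GU] [Gu Gv]] : exists2 G, F G /\ G `<=` U & pairing_dom G u /\ pairing_dom G v.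
    case: (Ftot G1 G2 F1 F2) => sub.
      by exists G2; split=> //; [exact: bigcup_sup|exists zu; exact: sub|exists zv].
    by exists G1; split=> //; [exact: bigcup_sup|exists zu|exists zv; exact: sub].
  by have [_ _ _ /(_ u v Gu Gv)[z /GU Uz]] := FP G FG; exists z.
Qed.

Definition fresh_pairs (A B : set X) : set (X * X) := (A `|` B) `*` (A `|` B) `\` A `*` A.

Section Extension.
Variables (G : set triple) (B : set X) (k : X * X -> X).
Hypotheses (hG : square_pairing G) (BnG : forall x, B x -> ~ pairing_dom G x).
Let A := pairing_dom G.
Let N := fresh_pairs A B.
Hypotheses (kN : forall p, N p -> B (k p))
  (k_inj : forall p q, N p -> N q -> k p = k q -> p = q).

Definition extend_pairing : set triple := G `|` [set (p, k p) | p in N].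

Let GA u v z : G ((u, v), z) -> [/\ A u, A v & A z].
Proof. by case: hG => Gdom _ _ _ /Gdom. Qed.

Let diagN x : B x -> N (x, x).
Proof. by move=> Bx; split; [split; right|case=> /BnG]. Qed.

Lemma pairing_dom_extend : pairing_dom extend_pairing = A `|` B.
Proof.
apply/seteqP; split=> [x [z [/GA[]|[p Np [Ep _]]]]|x [[z Gz]|Bx]].
- by left.
- by move: Np; rewrite Ep => -[[]].
- by exists z; left.
- by exists (k (x, x)); right; exists (x, x) => //; exact: diagN.
Qed.

Lemma proper_extend_pairing : B !=set0 -> G `<` extend_pairing.
Proof.
move=> [b Bb]; split=> [t|G'G]; first by left.
have /G'G/GA[/BnG] : extend_pairing ((b, b), k (b, b)).
  by right; exists (b, b); [exact: diagN|].
by [].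
Qed.

Lemma square_pairing_extend : square_pairing extend_pairing.
Proof.
case: hG => _ Gfun Ginj Gtot.
have GN p z : G (p, z) -> ~ N p by case: p => u v /GA[Au Av _] [_ []].
have GkN p q z : G (p, z) -> N q -> z <> k q.
  by case: p => u v /GA[_ _ Az] /kN Bkq Ez; apply: (BnG Bkq); rewrite -Ez.
split; rewrite ?pairing_dom_extend.
- move=> u v z [/GA[Au Av Az]|[p Np [? ?]]]; subst; first by split; left.
  by case: (Np) => -[ABu ABv] _; split=> //; right; exact: kN.
- move=> p z z' [Gz|[q Nq [? ?]]] [Gz'|[q' Nq' [? ?]]]; subst => //.
  + exact: Gfun Gz Gz'.
  + by case: (GN _ _ Gz Nq').
  + by case: (GN _ _ Gz' Nq).
- move=> p p' z [Gz|[q Nq [? ?]]] [Gz'|[q' Nq' [? Ez]]]; subst.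
  + exact: Ginj Gz Gz'.
  + by case: (GkN _ _ _ Gz Nq').
  + by case: (GkN _ _ _ Gz' Nq).
  + exact: k_inj.
- move=> u v ABu ABv; case: (pselect (A u /\ A v)) => [[Au Av]|nAuv].
    by have [z Gz] := Gtot u v Au Av; exists z; left.
  by exists (k (u, v)); right; exists (u, v).
Qed.

End Extension.

End SquarePairing.

Section Hessenberg.
Variables (X : Type) (e : nat -> X).
Hypothesis e_inj : injective e.

Definition nat_square_pairing : set ((X * X) * X) :=
  range (fun ij : nat * nat => ((e ij.1, e ij.2), e (pickle ij))).

Lemma pairing_dom_nat i : pairing_dom nat_square_pairing (e i).
Proof. by exists (e (pickle (i, i))); exists (i, i). Qed.

Lemma square_pairing_nat : square_pairing nat_square_pairing.
Proof.
split.
- by move=> u v z [[i j] _ [<- <- <-]]; split; apply: pairing_dom_nat.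
- by move=> p z z' [[i j] _ [<- <-]] [[i' j'] _ [/e_inj-> /e_inj-> <-]].
- move=> p p' z [[i j] _ [<- <-]] [[i' j'] _ [<- /e_inj/(pcan_inj pickleK)]].
  by case=> -> ->.
- move=> u v [zu [[i j] _ [<- _ _]]] [zv [[i' j'] _ [<- _ _]]].
  by exists (e (pickle (i, i'))); exists (i, i').
Qed.

(* Take a maximal pairing on A containing the one on e(N).  If A embedded in its
   complement, a disjoint copy B of A would satisfy |(A ∪ B)² \ A²| <= |A| = |B|
   and the pairing would extend; so the complement embeds in A, hence X does. *)
Theorem pairing_of_inj_nat : exists p : X * X -> X, injective p.
Proof.
have [G [hG G0G Gmax]] :=
  Zorn_bigcup_above square_pairing_nat (@square_pairing_bigcup X).
set A := pairing_dom G.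
have eA i : A (e i) by apply: pairing_dom_sub G0G _ (pairing_dom_nat i).
have AA : embeds (A `*` A) A by exact: square_pairing_embeds.
have AU B : embeds B A -> embeds (A `|` B) A.
  by apply: embeds_setU_pairing (eA 0) (eA 1) _ => // /e_inj.
have AUsqr B : embeds B A -> embeds ((A `|` B) `*` (A `|` B)) A.
  by move=> BA; apply: embeds_trans AA; apply: embeds_setX; apply: AU.
case: (embeds_comparable (~` A) A) => [/AUsqr|[phi phiA phiinj]].
  by rewrite setUCr => -[p _ pinj]; exists p => x y; apply: pinj.
exfalso; set B := phi @` A.
have BA : embeds B A by exact: embeds_image.
have freshB : embeds (fresh_pairs A B) B.
  apply: (@embeds_sub _ _ _ ((A `|` B) `*` (A `|` B))); first by move=> p [].
  apply: embeds_trans (AUsqr _ BA) _.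
  by exists phi => [x Ax|]; [exists x|].
have BnA x : B x -> ~ A x by case=> y Ay <-; apply: phiA.
have B0 : B !=set0 by exists (phi (e 0)); exists (e 0).
have [k kB k_inj] := freshB.
exact: Gmax _ (proper_extend_pairing k hG BnA B0) (square_pairing_extend hG BnA kB k_inj).
Qed.

End Hessenberg.

Local Open Scope ring_scope.

Lemma natr_min_bool (R : numDomainType) (b c : bool) :
  Num.min (b%:R : R) c%:R = (b && c)%:R.
Proof. by rewrite -natr_min; case: b; case: c. Qed.

Lemma natr_max_bool (R : numDomainType) (b c : bool) :
  Num.max (b%:R : R) c%:R = (b || c)%:R.
Proof. by rewrite -natr_max; case: b; case: c. Qed.

Section PrimeFilter.
Context {d : Order.disp_t} (L : distrLatticeType d).
Implicit Types (x y u v : L) (F : set L).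

Definition filter_avoiding y F :=
  [/\ forall u v, F u -> (u <= v)%O -> F v,
      forall u v, F u -> F v -> F (u `&` v)%O & ~ F y].

Lemma maximal_filter_avoiding_prime y F :
  filter_avoiding y F -> F !=set0 -> (forall G, F `<` G -> ~ filter_avoiding y G) ->
  forall u v, F (u `|` v)%O -> F u \/ F v.
Proof.
move=> [Fup FI Fy] [x Fx] Fmax.
have avoid u : ~ F u -> exists2 f, F f & (f `&` u <= y)%O.
  move=> Fu; apply: contrapT => noy.
  apply: (Fmax [set z | exists2 f, F f & (f `&` u <= z)%O]).
    split=> [f Ff|/(_ u) GF]; first by exists f => //; exact: leIl.
    by apply: Fu; apply: GF; exists x => //; exact: leIr.
  split=> [w z [f Ff fw] wz|w z [f1 F1 h1] [f2 F2 h2]|//].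
    by exists f => //; exact: le_trans wz.
  exists (f1 `&` f2)%O; first exact: FI.
  rewrite lexI; apply/andP; split.
    by apply: le_trans h1; apply: leI2 => //; exact: leIl.
  by apply: le_trans h2; apply: leI2 => //; exact: leIr.
move=> u v Fuv; apply: contrapT => /not_orP[/avoid[f1 F1 h1] /avoid[f2 F2 h2]].
apply: Fy (Fup ((f1 `&` f2) `&` (u `|` v))%O _ (FI _ _ (FI _ _ F1 F2) Fuv) _).
rewrite meetUr leUx; apply/andP; split.
  by apply: le_trans h1; apply: leI2 => //; exact: leIl.
by apply: le_trans h2; apply: leI2 => //; exact: leIr.
Qed.

Lemma prime_filter_separation x y : ~ (x <= y)%O ->
  exists F, [/\ filter_avoiding y F, F x & forall u v, F (u `|` v)%O -> F u \/ F v].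
Proof.
move=> nxy.
have [|C CP Ctot|F [hF xF Fmax]] := @Zorn_bigcup_above _ (filter_avoiding y) [set z | x <= z]%O.
- split=> [u v /= xu uv|u v /= xu xv|//]; first exact: le_trans uv.
  by rewrite lexI xu xv.
- split=> [u v [F CF Fu] uv|u v [F1 C1 F1u] [F2 C2 F2v]|[F CF]].
  + by exists F => //; have [Fup _ _] := CP F CF; exact: Fup uv.
  + have [[_ FI1 _] [_ FI2 _]] := (CP F1 C1, CP F2 C2).
    case: (Ctot F1 F2 C1 C2) => sub.
      by exists F2 => //; apply: FI2 => //; exact: sub.
    by exists F1 => //; apply: FI1 => //; exact: sub.
  + by move=> Fy; have [_ _ []] := CP F CF.
- have Fx : F x by apply: xF => /=.
  exists F; split=> //.
  by apply: (maximal_filter_avoiding_prime hF) => //; exists x.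
Qed.

Lemma prime_filter_LstarB (R : realType) y F :
  filter_avoiding y F -> (forall u v, F (u `|` v)%O -> F u \/ F v) ->
  is_LstarB (fun z => (`[< F z >])%:R : R).
Proof.
move=> [Fup FI _] Fprime; split=> [z|].
  by case: asbool; apply/andP; split; rewrite /= ?mulr1n ?mulr0n; lra.
split=> z w; rewrite ?natr_min_bool ?natr_max_bool -?asbool_and -?asbool_or.
  congr (nat_of_bool _)%:R; apply: asbool_equiv_eq; split=> [Fzw|[]]; last exact: FI.
  by split; apply: Fup Fzw _; [exact: leIl|exact: leIr].
congr (nat_of_bool _)%:R; apply: asbool_equiv_eq; split=> [|[] Fzw]; first exact: Fprime.
  by apply: Fup Fzw _; exact: leUl.
by apply: Fup Fzw _; exact: leUr.
Qed.

Lemma Lstar_separation (R : realType) x y : ~ (x <= y)%O ->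
  exists s : Lstar L R, sval s x = 1 /\ sval s y = 0.
Proof.
move=> /prime_filter_separation[F [hF Fx Fprime]].
exists (exist _ _ (prime_filter_LstarB R hF Fprime)) => /=.
by rewrite asboolT // asboolF //; case: hF.
Qed.

End PrimeFilter.

Section RealLemmas.
Variable R : realType.
Implicit Types x y u v a b : R.

Let normr_ge x : x <= `|x| /\ - x <= `|x|.
Proof. by split; [exact: ler_norm|rewrite -normrN; exact: ler_norm]. Qed.

Lemma normr_max_le x y : `|Num.max x y| <= `|x| + `|y|.
Proof.
have [? ?] := normr_ge x; have [? ?] := normr_ge y.
by rewrite ler_norml; case: (lerP x y) => ?; apply/andP; split; lra.
Qed.

Lemma normr_maxB x y u v : `|Num.max x y - Num.max u v| <= `|x - u| + `|y - v|.
Proof.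
have [? ?] := normr_ge (x - u); have [? ?] := normr_ge (y - v).
by rewrite ler_norml; case: (lerP x y) => ?; case: (lerP u v) => ?; apply/andP; split; lra.
Qed.

Lemma normr_clamp_le a b x y : a <= y <= b ->
  `|y - Num.max a (Num.min x b)| <= `|y - x|.
Proof.
move=> /andP[? ?]; have [? ?] := normr_ge (y - x).
rewrite ler_norml; case: (lerP x b) => ?; case: (lerP a x) => ?;
  try case: (lerP a b) => ?; apply/andP; split; lra.
Qed.

Lemma clamp_itv a b x : a <= b -> a <= Num.max a (Num.min x b) <= b.
Proof.
move=> ?; case: (lerP x b) => ?; case: (lerP a x) => ?;
  try case: (lerP a b) => ?; apply/andP; split; lra.
Qed.

End RealLemmas.

Section FBLNorm.
Context {d : Order.disp_t} (L : distrLatticeType d) (R : realType).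
Local Notation F := (Lstar L R -> R).
Implicit Types (f g h : F) (s : Lstar L R).

Lemma Lstar_norm_le1 s x : `|sval s x| <= 1.
Proof. by case: s => f [hb _] /=; rewrite ler_norml; exact: hb. Qed.

Lemma Lstar_homo s : {homo sval s : x y / (x <= y)%O}.
Proof.
case: s => h [_ [hI _]] x y /= /meet_idPl xy.
by rewrite -xy hI ge_min lexx orbT.
Qed.

Definition Lstar0 : Lstar L R.
Proof.
exists (fun _ => 0); split; first by move=> x; rewrite lerN10 ler01.
by split=> x y; rewrite ?minxx ?maxxx.
Defined.

Lemma norm_set0 h : norm_set h 0.
Proof. by exists 0%N, (fun _ => Lstar0); split=> [x|]; rewrite big_ord0 ?ler01. Qed.

Lemma norm_set_normr h s : norm_set h `|h s|.
Proof. by exists 1%N, (fun _ => s); split=> [x|]; rewrite big_ord1 ?Lstar_norm_le1. Qed.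

Lemma norm_set_ubound_dominated h h1 h2 c1 c2 M1 M2 : 0 <= c1 -> 0 <= c2 ->
  (forall s, `|h s| <= c1 * `|h1 s| + c2 * `|h2 s|) ->
  ubound (norm_set h1) M1 -> ubound (norm_set h2) M2 ->
  ubound (norm_set h) (c1 * M1 + c2 * M2).
Proof.
move=> c1p c2p hh u1 u2 _ [m [xs [Hxs ->]]].
apply: (le_trans (ler_sum _ (fun i _ => hh (xs i)))).
rewrite big_split /= -!mulr_sumr.
by apply: lerD; apply: ler_wpM2l => //; [apply: u1|apply: u2]; exists m, xs.
Qed.

Lemma fnorm_ubound h : finite_norm h -> ubound (norm_set h) (fnorm h).
Proof. by move=> hf; apply: sup_upper_bound; split=> //; exists 0; exact: norm_set0. Qed.

Lemma fnorm_le h M : ubound (norm_set h) M -> fnorm h <= M.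
Proof. by move=> u; apply: ge_sup => //; exists 0; exact: norm_set0. Qed.

Lemma finite_normB f g : finite_norm f -> finite_norm g -> finite_norm (fun s => f s - g s).
Proof.
move=> /fnorm_ubound uf /fnorm_ubound ug; exists (1 * fnorm f + 1 * fnorm g).
by apply: norm_set_ubound_dominated ler01 ler01 _ uf ug => s; rewrite !mul1r ler_normB.
Qed.

Lemma normr_lt_fnormB f g s r : finite_norm f -> finite_norm g ->
  fnorm (fun s => f s - g s) < r -> `|f s - g s| < r.
Proof.
move=> ff fg; apply: le_lt_trans.
exact: fnorm_ubound (finite_normB ff fg) _ (norm_set_normr _ s).
Qed.

Lemma gen_sublattice_finite_norm g : gen_sublattice g -> finite_norm g.
Proof.
elim=> {g} [x|f g _ /fnorm_ubound uf _ /fnorm_ubound ug|c f _ /fnorm_ubound uf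
           |f g _ /fnorm_ubound uf _ /fnorm_ubound ug].
- by exists 1; move=> _ [m [xs [Hxs ->]]]; exact: Hxs.
- exists (1 * fnorm f + 1 * fnorm g).
  by apply: norm_set_ubound_dominated ler01 ler01 _ uf ug => s; rewrite !mul1r ler_normD.
- exists (`|c| * fnorm f + 0 * fnorm f).
  apply: (norm_set_ubound_dominated (normr_ge0 c) (lexx 0) _ uf uf) => s.
  by rewrite mul0r addr0 normrM.
- exists (1 * fnorm f + 1 * fnorm g).
  by apply: norm_set_ubound_dominated ler01 ler01 _ uf ug => s; rewrite !mul1r normr_max_le.
Qed.

Lemma gen_sublattice_pos_homogeneous g : gen_sublattice g -> pos_homogeneous g.
Proof.
elim=> {g} [x|f g _ hf _ hg|c f _ hf|f g _ hf _ hg] xs ys lam l0 H.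
- exact: H.
- by rewrite (hf _ _ _ l0 H) (hg _ _ _ l0 H) mulrDr.
- by rewrite (hf _ _ _ l0 H) mulrCA.
- by rewrite (hf _ _ _ l0 H) (hg _ _ _ l0 H) maxr_pMr.
Qed.

Lemma gen_sublattice_FBL g : gen_sublattice g -> FBL g.
Proof.
move=> gg; split; first exact: gen_sublattice_pos_homogeneous.
split=> [|eps e0]; first exact: gen_sublattice_finite_norm.
exists g; split=> //; apply: le_lt_trans e0; apply: fnorm_le => _ [m [xs [_ ->]]].
by rewrite big1 // => i _; rewrite subrr normr0.
Qed.

Lemma gen_sublattice_min f g : gen_sublattice f -> gen_sublattice g ->
  gen_sublattice (fun s => Num.min (f s) (g s)).
Proof.
move=> gf gg; have -> : (fun s => Num.min (f s) (g s)) =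
    (fun s => -1 * Num.max (-1 * f s) (-1 * g s)).
  by apply: funext => s; rewrite !mulN1r -oppr_min opprK.
by apply: gs_scale; apply: gs_max; apply: gs_scale.
Qed.

End FBLNorm.

Section LowerBound.
Context {d : Order.disp_t} (L : distrLatticeType d) (R : realType).
Local Notation F := (Lstar L R -> R).

Lemma separated_family_card_le (S D : set F) (I : Type) (A : set I)
    (f : I -> F) (r : I -> R) :
  (forall h, S h -> finite_norm h) -> dense_subset S D ->
  (forall i, A i -> S (f i) /\ 0 < r i) ->
  (forall i j, A i -> A j -> i <> j -> exists s, r i + r j <= `|f i s - f j s|) ->
  A #<= D.
Proof.
move=> Sfin [DS Ddense] fS fsep.
have [g gP] : {g : I -> F & forall i, A i -> D (g i) /\ fnorm (fun s => f i s - g i s) < r i}.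
  apply: (@choice _ _ (fun i h => A i -> D h /\ fnorm (fun s => f i s - h s) < r i)) => i.
  case: (pselect (A i)) => [Ai|nAi]; last by exists (f i).
  have [Sfi ri0] := fS i Ai; have [h [Dh fh]] := Ddense _ Sfi _ ri0.
  by exists h.
have close i s : A i -> `|f i s - g i s| < r i.
  move=> Ai; have [Dgi fgi] := gP i Ai.
  exact: normr_lt_fnormB (Sfin _ (fS i Ai).1) (Sfin _ (DS _ Dgi)) fgi.
apply: embeds_card_le; exists g => [i /gP[]//|i j Ai Aj gij].
apply: contrapT => ij; have [s sep] := fsep i j Ai Aj ij.
have := close i s Ai; have := close j s Aj; rewrite -gij.
have := ler_distD (g i s) (f i s) (f j s); rewrite (distrC (g i s)); lra.
Qed.

Lemma FBL_interval_finite_norm (a b : L) (f : F) : FBL_interval a b f -> finite_norm f.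
Proof. by case=> -[_ []]. Qed.

Lemma delta_FBL_interval (a b x : L) : (a <= x <= b)%O -> FBL_interval a b (delta (R:=R) x).
Proof.
move=> /andP[ax xb]; split; first by apply: gen_sublattice_FBL; exact: gs_delta.
by move=> s; apply/andP; split; apply: Lstar_homo.
Qed.

Lemma segment_FBL_interval (a b : L) (t : R) : (a <= b)%O -> 0 <= t <= 1 ->
  FBL_interval a b (fun s => (1 - t) * delta a s + t * delta b s).
Proof.
move=> ab /andP[t0 t1]; split.
  by apply: gen_sublattice_FBL; apply: gs_add; apply: gs_scale; exact: gs_delta.
by move=> s; have := Lstar_homo s ab; rewrite /delta => ?; apply/andP; split; nra.
Qed.

Lemma interval_card_le_dense (a b : L) (D : set F) :
  dense_subset (FBL_interval a b) D -> [set x | (a <= x <= b)%O] #<= D.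
Proof.
move=> dense; apply: (separated_family_card_le (@FBL_interval_finite_norm a b) dense
  (f := fun x => delta x) (r := fun _ => 2^-1)) => [x abx|x y _ _ xy].
  by split; [exact: delta_FBL_interval|rewrite invr_gt0 ltr0n].
have [nxy|nyx] : ~ (x <= y)%O \/ ~ (y <= x)%O.
  by apply: contrapT => /not_orP[/contrapT xy' /contrapT yx']; apply/xy/le_anti; rewrite xy' yx'.
- have [s [sx sy]] := Lstar_separation R nxy.
  by exists s; rewrite /delta sx sy subr0 normr1; lra.
- have [s [sy sx]] := Lstar_separation R nyx.
  by exists s; rewrite /delta sx sy sub0r normrN normr1; lra.
Qed.

Lemma nat_card_le_dense (a b : L) (D : set F) : (a < b)%O ->
  dense_subset (FBL_interval a b) D -> [set: nat] #<= D.
Proof.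
move=> ltab dense; pose t n : R := 2^-1 ^+ n.
have t_gt0 n : 0 < t n by apply: exprn_gt0; lra.
have t_le1 n : t n <= 1 by apply: exprn_ile1; lra.
have t_halve n m : (n < m)%N -> t m <= t n / 2.
  by move=> nm; apply: le_trans (ler_wiXn2l _ _ nm) _; rewrite ?exprSr //; lra.
have [s [sb sa]] : exists s : Lstar L R, sval s b = 1 /\ sval s a = 0.
  by apply: Lstar_separation => ba; have := lt_le_trans ltab ba; rewrite ltxx.
apply: (separated_family_card_le (@FBL_interval_finite_norm a b) dense
  (f := fun n s => (1 - t n) * delta a s + t n * delta b s) (r := fun n => t n / 4)).
  move=> n _; split; last by have := t_gt0 n; lra.
  by apply: segment_FBL_interval (ltW ltab) _; rewrite ltW ?t_le1.
move=> n m _ _ nm; exists s; rewrite /delta sa sb !mulr0 !mulr1 !add0r.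
have := ler_norm (t n - t m); have := ler_norm (t m - t n); rewrite distrC.
have := t_gt0 n; have := t_gt0 m.
by case: (ltngtP n m) => // /t_halve; lra.
Qed.

End LowerBound.

(* Vector lattice terms with rational scalars: there are few enough of them,
   and their values approximate the whole generated sublattice. *)
Inductive vl_term (T : Type) :=
| VDelta of T
| VAdd of vl_term T & vl_term T
| VScale of rat & vl_term T
| VMax of vl_term T & vl_term T.

Lemma vl_term_inj (T X : Type) (i : T -> X) (e : nat -> X) (p : X * X -> X) :
  injective i -> injective e -> injective p -> exists c : vl_term T -> X, injective c.
Proof.
move=> i_inj e_inj p_inj.
pose fix c t := match t with
  | VDelta x => p (e 0, i x)
  | VAdd t u => p (e 1, p (c t, c u))
  | VScale q t => p (e 2, p (e (pickle q), c t))
  | VMax t u => p (e 3, p (c t, c u))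
  end.
exists c; elim=> [x|t IHt u IHu|q t IHt|t IHt u IHu] [y|t' u'|q' t'|t' u'] /=
  /p_inj[]; try by move=> /e_inj.
- by move=> /i_inj->.
- by move=> /p_inj[/IHt-> /IHu->].
- by move=> /p_inj[/e_inj/(pcan_inj pickleK)-> /IHt->].
- by move=> /p_inj[/IHt-> /IHu->].
Qed.

Lemma card_vl_term_le (T : Type) : [set: vl_term T] #<= [set: (T + nat)%type].
Proof.
have [p p_inj] := pairing_of_inj_nat (@inr_inj T nat).
have [c c_inj] := vl_term_inj (@inl_inj T nat) (@inr_inj T nat) p_inj.
by apply: embeds_card_le; exists c => // x y _ _ /c_inj.
Qed.

Lemma ratr_approx (R : realType) (c e : R) : 0 < e -> exists q : rat, `|c - ratr q| < e.
Proof.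
move=> e0; have [q] := @rat_in_itvoo R (c - e) (c + e) ltac:(lra).
by rewrite in_itv /= => /andP[? ?]; exists q; rewrite ltr_norml; apply/andP; split; lra.
Qed.

Section TermApproximation.
Context {d : Order.disp_t} (L : distrLatticeType d) (R : realType).
Local Notation F := (Lstar L R -> R).

Fixpoint vl_eval (t : vl_term L) : F :=
  match t with
  | VDelta x => delta x
  | VAdd t u => fun s => vl_eval t s + vl_eval u s
  | VScale q t => fun s => ratr q * vl_eval t s
  | VMax t u => fun s => Num.max (vl_eval t s) (vl_eval u s)
  end.

Lemma vl_eval_gen_sublattice t : gen_sublattice (vl_eval t).
Proof.
elim: t => [x|t IHt u IHu|q t IHt|t IHt u IHu] /=; first exact: gs_delta.
- exact: gs_add.
- exact: gs_scale.
- exact: gs_max.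
Qed.

Lemma vl_eval_approx_scale (c eps : R) (f : F) : 0 < eps -> has_ubound (norm_set f) ->
  (forall e, 0 < e -> exists t, ubound (norm_set (fun s => f s - vl_eval t s)) e) ->
  exists t, ubound (norm_set (fun s => c * f s - vl_eval t s)) eps.
Proof.
move=> e0 [B Bf] approx_f; have B0 : 0 <= B by apply: Bf; exact: norm_set0.
have K0 : 0 < eps / (2 * (B + 1)) by rewrite divr_gt0 //; lra.
have [del [del0 del1 delK]] : exists del,
    [/\ 0 < del, del <= 1 & del <= eps / (2 * (B + 1))].
  by exists (Num.min 1 (eps / (2 * (B + 1)))); rewrite lt_min ltr01 K0 !ge_min !lexx orbT.
have [q cq] := ratr_approx c del0.
have qc : `|ratr q : R| <= `|c| + 1.
  have -> : ratr q = c - (c - ratr q) :> R by ring.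
  by apply: le_trans (ler_normB _ _) _; lra.
have c0 := normr_ge0 c.
have [t ft] := approx_f (eps / (2 * (`|c| + 1))) ltac:(rewrite divr_gt0 //; lra).
exists (VScale q t) => /=.
have dom s : `|c * f s - ratr q * vl_eval t s| <=
    del * `|f s| + (`|c| + 1) * `|f s - vl_eval t s|.
  have -> : c * f s - ratr q * vl_eval t s =
    (c - ratr q) * f s + ratr q * (f s - vl_eval t s) by ring.
  apply: le_trans (ler_normD _ _) _; rewrite (normrM (c - ratr q)) (normrM (ratr q)).
  by apply: lerD; apply: ler_wpM2r => //; exact: ltW.
have hub := norm_set_ubound_dominated (ltW del0) (addr_ge0 c0 ler01) dom Bf ft.
move=> r /hub /le_trans; apply.
have -> : (`|c| + 1) * (eps / (2 * (`|c| + 1))) = eps / 2.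
  by field; apply: lt0r_neq0; lra.
have : del * B <= eps / (2 * (B + 1)) * (B + 1) by apply: ler_pM; lra.
have -> : eps / (2 * (B + 1)) * (B + 1) = eps / 2.
  by field; apply: lt0r_neq0; lra.
lra.
Qed.

Lemma gen_sublattice_approx (g : F) (eps : R) : gen_sublattice g -> 0 < eps ->
  exists t, ubound (norm_set (fun s => g s - vl_eval t s)) eps.
Proof.
move=> gg; elim: gg eps => {g} [x|f g _ IHf _ IHg|c f gf IHf|f g _ IHf _ IHg] eps e0.
- exists (VDelta x) => _ [m [xs [_ ->]]].
  by rewrite big1 ?ltW // => i _; rewrite subrr normr0.
- have [t ft] := IHf (eps / 2) ltac:(lra); have [u gu] := IHg (eps / 2) ltac:(lra).
  exists (VAdd t u); have -> : eps = 1 * (eps / 2) + 1 * (eps / 2) by field.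
  apply: norm_set_ubound_dominated ler01 ler01 _ ft gu => s /=.
  by rewrite !mul1r; apply: le_trans (ler_normD _ _); rewrite addrACA opprD.
- exact: vl_eval_approx_scale e0 (gen_sublattice_finite_norm gf) IHf.
- have [t ft] := IHf (eps / 2) ltac:(lra); have [u gu] := IHg (eps / 2) ltac:(lra).
  exists (VMax t u); have -> : eps = 1 * (eps / 2) + 1 * (eps / 2) by field.
  apply: norm_set_ubound_dominated ler01 ler01 _ ft gu => s /=.
  by rewrite !mul1r normr_maxB.
Qed.

End TermApproximation.

Section UpperBound.
Context {d : Order.disp_t} (L : distrLatticeType d) (R : realType) (a b : L).
Local Notation F := (Lstar L R -> R).

Definition clamp (h : F) : F := fun s => Num.max (delta a s) (Num.min (h s) (delta b s)).

Lemma clamp_FBL_interval h : (a <= b)%O -> gen_sublattice h -> FBL_interval a b (clamp h).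
Proof.
move=> ab gh; split.
  apply/gen_sublattice_FBL/gs_max; first exact: gs_delta.
  by apply: gen_sublattice_min => //; exact: gs_delta.
by move=> s; apply: clamp_itv; exact: Lstar_homo.
Qed.

Lemma normr_sub_clamp f h s : FBL_interval a b f -> `|f s - clamp h s| <= `|f s - h s|.
Proof. by move=> [_ /(_ s)]; exact: normr_clamp_le. Qed.

Lemma FBL_interval_dense_card_le : (a <= b)%O ->
  exists D : set F, dense_subset (FBL_interval a b) D /\ D #<= [set: (L + nat)%type].
Proof.
move=> ab; exists (range (fun t => clamp (vl_eval t))); split; [split|].
- by move=> _ [t _ <-]; apply: clamp_FBL_interval ab (vl_eval_gen_sublattice R t).
- move=> f fab eps e0; have [[_ [ff fapprox]] _] := fab.
  have [g [gg fg]] := fapprox (eps / 2) ltac:(lra).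
  have [t gt] := gen_sublattice_approx gg (ltac:(lra) : 0 < eps / 4).
  exists (clamp (vl_eval t)); split; first by exists t.
  have fgub := fnorm_ubound (finite_normB ff (gen_sublattice_finite_norm gg)).
  apply: le_lt_trans (fnorm_le (norm_set_ubound_dominated ler01 ler01 _ fgub gt)) _.
    move=> s; rewrite !mul1r; apply: le_trans (normr_sub_clamp _ _ fab) _.
    by apply: le_trans (ler_normD _ _); rewrite addrA subrK.
  lra.
- apply: card_le_trans (card_vl_term_le L).
  by apply: card_le_trans (card_image_le _ _) _; exact: card_lexx.
Qed.

End UpperBound.

Theorem mainTheorem5 {d : Order.disp_t} (L : distrLatticeType d) (R : realType)
    (a b : L) (hab : (a < b)%O) :
  (* max{aleph_0, |[a,b]_L|} <= dens([delta_a, delta_b]) *)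
  (forall D : set (Lstar L R -> R),
     dense_subset (FBL_interval a b) D ->
     [set: nat] #<= D /\ [set x : L | (a <= x <= b)%O] #<= D) /\
  (* dens([delta_a, delta_b]) <= max{aleph_0, |L|} = |L + nat| *)
  (exists D : set (Lstar L R -> R),
     dense_subset (FBL_interval a b) D /\ D #<= [set: (L + nat)%type]).
Proof.
split; last exact: FBL_interval_dense_card_le (ltW hab).
by move=> D dense; split; [exact: nat_card_le_dense hab dense|exact: interval_card_le_dense].
Qed.
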